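(* Let $L:\mathcal{A}\to \mathcal{B}$ and $R:\mathcal{B}\to \mathcal{A}$ be contravariant functors between abelian categories. (1) Assume that $(L,R)$ is a left adjoint pair, i.e. there are natural isomorphisms ${\rm Hom}_{\mathcal{B}}(L(A),B)\cong {\rm Hom}_{\mathcal{A}}(R(B),A)$, with associated natural transformations $\varepsilon:LR\to 1_{\mathcal{B}}$ and $\eta:RL\to 1_{\mathcal{A}}$. Let $M,N$ be objects of $\mathcal{B}$ with $M,N\in {\rm Refl}(R)$. Then the following are equivalent: (i) $N$ is strongly $M$-Rickart in $\mathcal{B}$; (ii) $R(M)$ is dual strongly $R(N)$-Rickart in $\mathcal{A}$ and for every morphism $f:M\to N$, ${\rm Ker}(f)$ is $M$-cyclic; (iii) $R(M)$ is dual strongly $R(N)$-Rickart in $\mathcal{A}$ and for every morphism $f:M\to N$, ${\rm Ker}(f)\in {\rm Refl}(R)$. (2) Assume that $(L,R)$ is a right adjoint pair, i.e. there are natural isomorphisms ${\rm Hom}_{\mathcal{A}}(A,R(B))\cong {\rm Hom}_{\mathcal{B}}(B,L(A))$, with associated natural transformations $\varepsilon:1_{\mathcal{B}}\to LR$ and $\eta:1_{\mathcal{A}}\to RL$. Let $M,N$ be objects of $\mathcal{A}$ with $M,N\in {\rm Refl}(L)$. Then the following are equivalent: (i) $N$ is dual strongly $M$-Rickart in $\mathcal{A}$; (ii) $L(M)$ is strongly $L(N)$-Rickart in $\mathcal{B}$ and for every morphism $f:M\to N$, ${\rm Coker}(f)$ is $N$-cocyclic; (iii) $L(M)$ is strongly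 $L(N)$-Rickart in $\mathcal{B}$ and for every morphism $f:M\to N$, ${\rm Coker}(f)\in {\rm Refl}(L)$.
   Context: ${\rm Refl}(R)$ is the class of objects $B$ of $\mathcal{B}$ for which $\varepsilon_B$ is an isomorphism ($R$-reflexive objects); ${\rm Refl}(L)$ is the class of objects $A$ of $\mathcal{A}$ for which $\eta_A$ is an isomorphism ($L$-reflexive objects). For objects $X,Y$, $Y$ is $X$-cyclic if there is an epimorphism $X\to Y$, and $X$ is $Y$-cocyclic if there is a monomorphism $X\to Y$. A morphism $f:X\to Y$ is a section if $f'f=1_X$ for some $f'$, a retraction if $ff'=1_Y$ for some $f'$. A monomorphism $k:K\to X$ is fully invariant if for every $h:X\to X$ there is $\alpha:K\to K$ with $hk=k\alpha$; an epimorphism $c:X\to C$ is fully coinvariant if for every $h:X\to X$ there is $\gamma:C\to C$ with $ch=\gamma c$. $N$ is strongly $M$-Rickart if the kernel of every morphism $f:M\to N$ is a fully invariant section; $N$ is dual strongly $M$-Rickart if the cokernel of every morphism $f:M\to N$ is a fully coinvariant retraction. *)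

Set Implicit Arguments.
Unset Strict Implicit.

Record Category : Type := {
  Obj :> Type;
  Hom : Obj -> Obj -> Type;
  comp : forall X Y Z : Obj, Hom Y Z -> Hom X Y -> Hom X Z;
  idm : forall X : Obj, Hom X X;
  comp_assoc : forall W X Y Z (f : Hom W X) (g : Hom X Y) (h : Hom Y Z),
      comp h (comp g f) = comp (comp h g) f;
  comp_id_l : forall X Y (f : Hom X Y), comp (idm Y) f = f;
  comp_id_r : forall X Y (f : Hom X Y), comp f (idm X) = f
}.
Arguments Hom {c} X Y.
Arguments comp {c X Y Z} g f.
Arguments idm {c} X.
Notation "g ∘ f" := (comp g f) (at level 40, left associativity).

Section Morphisms.
Context {C : Category}.

Definition mono {X Y : C} (f : Hom X Y) : Prop :=
  forall W (g h : Hom W X), f ∘ g = f ∘ h -> g = h.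
Definition epi {X Y : C} (f : Hom X Y) : Prop :=
  forall W (g h : Hom Y W), g ∘ f = h ∘ f -> g = h.
Definition iso {X Y : C} (f : Hom X Y) : Prop :=
  exists g : Hom Y X, g ∘ f = idm X /\ f ∘ g = idm Y.
Definition section {X Y : C} (f : Hom X Y) : Prop :=
  exists f' : Hom Y X, f' ∘ f = idm X.
Definition retraction {X Y : C} (f : Hom X Y) : Prop :=
  exists f' : Hom Y X, f ∘ f' = idm Y.

Definition is_kernel (z : forall X Y : C, Hom X Y) {X Y K : C}
    (f : Hom X Y) (k : Hom K X) : Prop :=
  f ∘ k = z K Y /\
  forall W (g : Hom W X), f ∘ g = z W Y -> exists! u : Hom W K, k ∘ u = g.
Definition is_cokernel (z : forall X Y : C, Hom X Y) {X Y Q : C}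
    (f : Hom X Y) (c : Hom Y Q) : Prop :=
  c ∘ f = z X Q /\
  forall W (g : Hom Y W), g ∘ f = z X W -> exists! u : Hom Q W, u ∘ c = g.

(** Y is X-cyclic: there is an epimorphism X -> Y *)
Definition cyclic (X Y : C) : Prop := exists p : Hom X Y, epi p.
(** X is Y-cocyclic: there is a monomorphism X -> Y *)
Definition cocyclic (X Y : C) : Prop := exists i : Hom X Y, mono i.

Definition fully_invariant {K X : C} (k : Hom K X) : Prop :=
  mono k /\ forall h : Hom X X, exists alpha : Hom K K, h ∘ k = k ∘ alpha.
Definition fully_coinvariant {X Q : C} (c : Hom X Q) : Prop :=
  epi c /\ forall h : Hom X X, exists gamma : Hom Q Q, c ∘ h = gamma ∘ c.
End Morphisms.

Record Abelian (C : Category) : Type := {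
  zero : forall X Y : C, Hom X Y;
  add : forall X Y : C, Hom X Y -> Hom X Y -> Hom X Y;
  opp : forall X Y : C, Hom X Y -> Hom X Y;
  add_assoc : forall X Y (f g h : Hom X Y), add f (add g h) = add (add f g) h;
  add_comm : forall X Y (f g : Hom X Y), add f g = add g f;
  add_0l : forall X Y (f : Hom X Y), add (zero X Y) f = f;
  add_oppr : forall X Y (f : Hom X Y), add f (opp f) = zero X Y;
  comp_addl : forall X Y Z (f : Hom X Y) (g g' : Hom Y Z),
      (add g g') ∘ f = add (g ∘ f) (g' ∘ f);
  comp_addr : forall X Y Z (f f' : Hom X Y) (g : Hom Y Z),
      g ∘ (add f f') = add (g ∘ f) (g ∘ f');
  zobj : C;
  zobj_initial : forall X (f g : Hom zobj X), f = g;
  zobj_terminal : forall X (f g : Hom X zobj), f = g;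
  biproducts : forall X Y : C, exists (P : C) (i1 : Hom X P) (i2 : Hom Y P)
      (p1 : Hom P X) (p2 : Hom P Y),
      p1 ∘ i1 = idm X /\ p2 ∘ i2 = idm Y /\ p1 ∘ i2 = zero Y X /\
      p2 ∘ i1 = zero X Y /\ add (i1 ∘ p1) (i2 ∘ p2) = idm P;
  kernels_exist : forall X Y (f : Hom X Y),
      exists (K : C) (k : Hom K X), is_kernel zero f k;
  cokernels_exist : forall X Y (f : Hom X Y),
      exists (Q : C) (c : Hom Y Q), is_cokernel zero f c;
  mono_normal : forall X Y (f : Hom X Y), mono f ->
      exists (Z : C) (g : Hom Y Z), is_kernel zero g f;
  epi_normal : forall X Y (f : Hom X Y), epi f ->
      exists (Z : C) (g : Hom Z X), is_cokernel zero g f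
}.
Arguments zero {C} a X Y.

Section Rickart.
Context {C : Category} (H : Abelian C).
(** N is strongly M-Rickart: the kernel of every f : M -> N is a fully
    invariant section (for every choice of kernel). *)
Definition strongly_rickart (M N : C) : Prop :=
  forall (f : Hom M N) (K : C) (k : Hom K M),
    is_kernel (zero H) f k -> section k /\ fully_invariant k.
(** N is dual strongly M-Rickart: the cokernel of every f : M -> N is a fully
    coinvariant retraction. *)
Definition dual_strongly_rickart (M N : C) : Prop :=
  forall (f : Hom M N) (Q : C) (c : Hom N Q),
    is_cokernel (zero H) f c -> retraction c /\ fully_coinvariant c.
End Rickart.

Record CoFunctor (C D : Category) : Type := {
  fobj :> C -> D;
  fmap : forall X Y : C, Hom X Y -> Hom (fobj Y) (fobj X);
  fmap_id : forall X : C, fmap (idm X) = idm (fobj X);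
  fmap_comp : forall X Y Z (f : Hom X Y) (g : Hom Y Z),
      fmap (g ∘ f) = fmap f ∘ fmap g
}.
Arguments fmap {C D} c {X Y} _.

Record LeftAdj {CA CB : Category} (L : CoFunctor CA CB) (R : CoFunctor CB CA)
  : Type := {
  ladj : forall (X : CA) (Y : CB), Hom (L X) Y -> Hom (R Y) X;
  ladj_inv : forall (X : CA) (Y : CB), Hom (R Y) X -> Hom (L X) Y;
  ladjK : forall X Y (g : Hom (L X) Y), ladj_inv (ladj g) = g;
  ladj_invK : forall X Y (p : Hom (R Y) X), ladj (ladj_inv p) = p;
  ladj_natA : forall X' X Y (a : Hom X' X) (g : Hom (L X') Y),
      ladj (g ∘ fmap L a) = a ∘ ladj g;
  ladj_natB : forall X Y Y' (b : Hom Y Y') (g : Hom (L X) Y),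
      ladj (b ∘ g) = ladj g ∘ fmap R b
}.
Arguments ladj {CA CB L R} l {X Y} _.
Arguments ladj_inv {CA CB L R} l {X Y} _.

Definition lcounit {CA CB} {L : CoFunctor CA CB} {R : CoFunctor CB CA}
  (adj : LeftAdj L R) (Y : CB) : Hom (L (R Y)) Y := ladj_inv adj (idm (R Y)).
Definition lunit {CA CB} {L : CoFunctor CA CB} {R : CoFunctor CB CA}
  (adj : LeftAdj L R) (X : CA) : Hom (R (L X)) X := ladj adj (idm (L X)).
Definition ReflR_left {CA CB} {L : CoFunctor CA CB} {R : CoFunctor CB CA}
  (adj : LeftAdj L R) (Y : CB) : Prop := iso (lcounit adj Y).

Record RightAdj {CA CB : Category} (L : CoFunctor CA CB) (R : CoFunctor CB CA)
  : Type := {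
  radj : forall (X : CA) (Y : CB), Hom X (R Y) -> Hom Y (L X);
  radj_inv : forall (X : CA) (Y : CB), Hom Y (L X) -> Hom X (R Y);
  radjK : forall X Y (p : Hom X (R Y)), radj_inv (radj p) = p;
  radj_invK : forall X Y (g : Hom Y (L X)), radj (radj_inv g) = g;
  radj_natA : forall X' X Y (a : Hom X' X) (p : Hom X (R Y)),
      radj (p ∘ a) = fmap L a ∘ radj p;
  radj_natB : forall X Y' Y (b : Hom Y' Y) (p : Hom X (R Y)),
      radj (fmap R b ∘ p) = radj p ∘ b
}.
Arguments radj {CA CB L R} r {X Y} _.
Arguments radj_inv {CA CB L R} r {X Y} _.

Definition rcounit {CA CB} {L : CoFunctor CA CB} {R : CoFunctor CB CA}
  (adj : RightAdj L R) (Y : CB) : Hom Y (L (R Y)) := radj adj (idm (R Y)).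
Definition runit {CA CB} {L : CoFunctor CA CB} {R : CoFunctor CB CA}
  (adj : RightAdj L R) (X : CA) : Hom X (R (L X)) := radj_inv adj (idm (L X)).
Definition ReflL_right {CA CB} {L : CoFunctor CA CB} {R : CoFunctor CB CA}
  (adj : RightAdj L R) (X : CA) : Prop := iso (runit adj X).


Set Implicit Arguments.
Unset Strict Implicit.

(* For a left adjoint pair, [R] is full on morphisms out of an [R]-reflexive
   object [M], faithful on morphisms out of any object whose counit is epic,
   and turns kernels in [B] into cokernels in [A].  Hence for [f : M -> N] the
   cokernel [R k] of [R f] is split and fully coinvariant as soon as the kernel
   [k] of [f] is; conversely, these properties of [R k] lift back to [k]
   provided the counit at [Ker f] is epic, which is what [M]-cyclicity and
   [R]-reflexivity of [Ker f] each guarantee (and what a split kernel has).  Part (2) is part (1) for the opposite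
   categories, where a right adjoint pair becomes a left adjoint pair. *)

Section Additive.
Context {C : Category} (H : Abelian C).

Lemma add_0r (X Y : C) (f : Hom X Y) : add H f (zero H X Y) = f.
Proof. rewrite add_comm. apply add_0l. Qed.

Lemma add_idem_zero (X Y : C) (f : Hom X Y) : add H f f = f -> f = zero H X Y.
Proof.
  intro Hf. rewrite <- (add_oppr H f).
  transitivity (add H (add H f f) (opp H f)).
  - rewrite <- add_assoc, add_oppr, add_0r. reflexivity.
  - rewrite Hf. reflexivity.
Qed.

Lemma comp_zero_l (X Y Z : C) (f : Hom X Y) : zero H Y Z ∘ f = zero H X Z.
Proof. apply add_idem_zero. rewrite <- comp_addl, add_0l. reflexivity. Qed.

Lemma comp_zero_r (X Y Z : C) (g : Hom Y Z) : g ∘ zero H X Y = zero H X Z.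
Proof. apply add_idem_zero. rewrite <- comp_addr, add_0l. reflexivity. Qed.

Lemma kernel_mono (X Y K : C) (f : Hom X Y) (k : Hom K X) :
  is_kernel (zero H) f k -> mono k.
Proof.
  intros [Hfk Huniv] W g h Hkg.
  assert (Hz : f ∘ (k ∘ g) = zero H W Y)
    by (rewrite comp_assoc, Hfk; apply comp_zero_l).
  destruct (Huniv W (k ∘ g) Hz) as [u [_ Hu]].
  rewrite <- (Hu g eq_refl). apply Hu. symmetry. exact Hkg.
Qed.
End Additive.

Section Splitting.
Context {C : Category}.

Lemma retraction_epi (X Y : C) (f : Hom X Y) : retraction f -> epi f.
Proof.
  intros [f' Hf] W g h E.
  rewrite <- (comp_id_r g), <- (comp_id_r h), <- Hf, !comp_assoc, E.
  reflexivity.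
Qed.

Lemma iso_epi (X Y : C) (f : Hom X Y) : iso f -> epi f.
Proof. intros [g [_ Hg]]. apply retraction_epi. exists g. exact Hg. Qed.

Lemma section_cyclic (X Y : C) (k : Hom Y X) : section k -> cyclic X Y.
Proof. intros [p Hp]. exists p. apply retraction_epi. exists k. exact Hp. Qed.

Lemma cokernel_unique (z : forall X Y : C, Hom X Y) (X Y Q Q' : C)
    (g : Hom X Y) (c : Hom Y Q) (c' : Hom Y Q') :
  is_cokernel z g c -> is_cokernel z g c' ->
  exists (phi : Hom Q' Q) (psi : Hom Q Q'),
    phi ∘ c' = c /\ psi ∘ c = c' /\ phi ∘ psi = idm Q.
Proof.
  intros [Hc Hcu] [Hc' Hc'u].
  destruct (Hc'u _ c Hc) as [phi [Hphi _]].
  destruct (Hcu _ c' Hc') as [psi [Hpsi _]].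
  exists phi, psi. split; [exact Hphi|]. split; [exact Hpsi|].
  destruct (Hcu _ c Hc) as [w [_ Hw]].
  transitivity w; [symmetry|]; apply Hw.
  - rewrite <- comp_assoc, Hpsi. exact Hphi.
  - apply comp_id_l.
Qed.

Lemma cokernel_split_coinvariant (z : forall X Y : C, Hom X Y) (X Y Q Q' : C)
    (g : Hom X Y) (c : Hom Y Q) (c' : Hom Y Q') :
  is_cokernel z g c -> is_cokernel z g c' ->
  retraction c' -> fully_coinvariant c' -> retraction c /\ fully_coinvariant c.
Proof.
  intros Hc Hc' [r Hr] [_ Hcoinv].
  destruct (cokernel_unique Hc Hc') as [phi [psi [Hphi [Hpsi Hphipsi]]]].
  assert (Hret : retraction c).
  { exists (r ∘ psi).
    rewrite <- Hphi, comp_assoc, <- (comp_assoc r c' phi), Hr, comp_id_r.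
    exact Hphipsi. }
  split; [exact Hret|]. split; [exact (retraction_epi Hret)|].
  intro h. destruct (Hcoinv h) as [gamma Hgamma].
  exists (phi ∘ gamma ∘ psi).
  rewrite <- !comp_assoc, Hpsi, <- Hphi, <- comp_assoc, Hgamma. reflexivity.
Qed.
End Splitting.

Section LeftAdjointPair.
Context {CA CB : Category} (HA : Abelian CA) (HB : Abelian CB)
  {L : CoFunctor CA CB} {R : CoFunctor CB CA} (adj : LeftAdj L R).

Lemma ladj_inj (X : CA) (Y : CB) (g h : Hom (L X) Y) :
  ladj adj g = ladj adj h -> g = h.
Proof. intro E. rewrite <- (ladjK adj g), <- (ladjK adj h), E. reflexivity. Qed.

Lemma fmap_R_counit (Y Y' : CB) (h : Hom Y Y') :
  fmap R h = ladj adj (h ∘ lcounit adj Y).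
Proof. unfold lcounit. rewrite ladj_natB, ladj_invK, comp_id_l. reflexivity. Qed.

Lemma lcounit_natural (Y' Y : CB) (b : Hom Y' Y) :
  lcounit adj Y ∘ fmap L (fmap R b) = b ∘ lcounit adj Y'.
Proof.
  apply ladj_inj. rewrite ladj_natA, ladj_natB. unfold lcounit.
  rewrite !ladj_invK, comp_id_l, comp_id_r. reflexivity.
Qed.

Lemma fmap_R_full (M Y : CB) (g : Hom (R Y) (R M)) :
  ReflR_left adj M -> exists h : Hom M Y, fmap R h = g.
Proof.
  intros [e [He _]]. exists (ladj_inv adj g ∘ e).
  rewrite fmap_R_counit, <- comp_assoc, He, comp_id_r. apply ladj_invK.
Qed.

Lemma fmap_R_faithful (K Y : CB) (h h' : Hom K Y) :
  epi (lcounit adj K) -> fmap R h = fmap R h' -> h = h'.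
Proof.
  intros Hepi E. rewrite !fmap_R_counit in E. apply Hepi, ladj_inj, E.
Qed.

(* [Hom (R 0) W] is in bijection with [Hom (L W) 0]. *)
Lemma R_zobj_initial (W : CA) (u v : Hom (R (zobj HB)) W) : u = v.
Proof.
  rewrite <- (ladj_invK adj u), <- (ladj_invK adj v).
  f_equal. apply zobj_terminal.
Qed.

Lemma fmap_R_zero (X Y : CB) : fmap R (zero HB X Y) = zero HA (R Y) (R X).
Proof.
  rewrite <- (comp_zero_l HB Y (zero HB X (zobj HB))), fmap_comp.
  rewrite (R_zobj_initial (fmap R (zero HB X (zobj HB))) (zero HA _ _)).
  apply comp_zero_l.
Qed.

Lemma ladj_zero (X : CA) (Y : CB) : ladj adj (zero HB (L X) Y) = zero HA (R Y) X.
Proof.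
  rewrite <- (comp_id_r (zero HB (L X) Y)), ladj_natB, fmap_R_zero.
  apply comp_zero_r.
Qed.

Lemma fmap_R_kernel_cokernel (M N K : CB) (f : Hom M N) (k : Hom K M) :
  is_kernel (zero HB) f k -> is_cokernel (zero HA) (fmap R f) (fmap R k).
Proof.
  intros [Hfk Huniv]. split.
  - rewrite <- fmap_comp, Hfk. apply fmap_R_zero.
  - intros W g Hg.
    assert (Hz : f ∘ ladj_inv adj g = zero HB (L W) N).
    { apply ladj_inj. rewrite ladj_natB, ladj_invK, Hg, ladj_zero. reflexivity. }
    destruct (Huniv _ _ Hz) as [y [Hy Hyu]].
    exists (ladj adj y). split.
    + rewrite <- ladj_natB, Hy. apply ladj_invK.
    + intros u Hu. rewrite <- (ladj_invK adj u). f_equal. apply Hyu.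
      apply ladj_inj. rewrite ladj_natB, !ladj_invK. exact Hu.
Qed.

Lemma ReflR_left_section (M K : CB) (k : Hom K M) :
  ReflR_left adj M -> section k -> ReflR_left adj K.
Proof.
  intros [e [He1 He2]] [p Hp].
  exists (fmap L (fmap R p) ∘ e ∘ k). split.
  - rewrite <- !comp_assoc, <- lcounit_natural, (comp_assoc _ _ e), He1, comp_id_l.
    rewrite <- !fmap_comp, Hp, !fmap_id. reflexivity.
  - rewrite !comp_assoc, lcounit_natural, <- (comp_assoc e), He2, comp_id_r.
    exact Hp.
Qed.

Lemma cyclic_lcounit_epi (M K : CB) :
  ReflR_left adj M -> cyclic M K -> epi (lcounit adj K).
Proof.
  intros [e [_ He]] [p Hp] W g h E.
  apply Hp.
  rewrite <- (comp_id_r (g ∘ p)), <- (comp_id_r (h ∘ p)), <- He, !comp_assoc,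
    <- !(comp_assoc (lcounit adj M)), <- !lcounit_natural, !comp_assoc, E.
  reflexivity.
Qed.

Section Rickart.
Variables M N : CB.
Hypothesis reflM : ReflR_left adj M.

Lemma strongly_rickart_dual_R :
  strongly_rickart HB M N -> dual_strongly_rickart HA (R N) (R M).
Proof.
  intros Hsr g Q c Hc.
  destruct (fmap_R_full g reflM) as [f <-].
  destruct (kernels_exist HB f) as [K [k Hk]].
  destruct (Hsr f K k Hk) as [[p Hp] [_ Hinv]].
  assert (Hret : retraction (fmap R k)).
  { exists (fmap R p). rewrite <- fmap_comp, Hp. apply fmap_id. }
  apply (cokernel_split_coinvariant Hc (fmap_R_kernel_cokernel Hk) Hret).
  split; [exact (retraction_epi Hret)|].
  intro t. destruct (fmap_R_full t reflM) as [s <-].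
  destruct (Hinv s) as [alpha Halpha].
  exists (fmap R alpha). rewrite <- !fmap_comp, Halpha. reflexivity.
Qed.

Lemma dual_R_strongly_rickart :
  dual_strongly_rickart HA (R N) (R M) ->
  (forall (f : Hom M N) (K : CB) (k : Hom K M),
     is_kernel (zero HB) f k -> epi (lcounit adj K)) ->
  strongly_rickart HB M N.
Proof.
  intros Hdsr Hepi f K k Hk.
  specialize (Hepi f K k Hk).
  destruct (Hdsr _ _ _ (fmap_R_kernel_cokernel Hk)) as [[q Hq] [_ Hcoinv]].
  destruct (fmap_R_full q reflM) as [p <-].
  split.
  - exists p. apply (fmap_R_faithful Hepi).
    rewrite fmap_comp, Hq, fmap_id. reflexivity.
  - split; [exact (kernel_mono Hk)|].
    intro s. destruct (Hcoinv (fmap R s)) as [gamma Hgamma].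
    destruct Hk as [Hfk Huniv].
    assert (Hz : f ∘ (s ∘ k) = zero HB K N).
    { apply (fmap_R_faithful Hepi).
      rewrite fmap_R_zero, !fmap_comp, Hgamma, <- comp_assoc, <- fmap_comp,
        Hfk, fmap_R_zero.
      apply comp_zero_r. }
    destruct (Huniv _ _ Hz) as [alpha [Halpha _]].
    exists alpha. symmetry. exact Halpha.
Qed.

Lemma left_adj_strongly_rickart_iff :
  (strongly_rickart HB M N <->
     (dual_strongly_rickart HA (R N) (R M) /\
      forall (f : Hom M N) (K : CB) (k : Hom K M),
        is_kernel (zero HB) f k -> cyclic M K)) /\
  (strongly_rickart HB M N <->
     (dual_strongly_rickart HA (R N) (R M) /\
      forall (f : Hom M N) (K : CB) (k : Hom K M),
        is_kernel (zero HB) f k -> ReflR_left adj K)).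
Proof.
  split; split.
  - intro Hsr. split; [exact (strongly_rickart_dual_R Hsr)|].
    intros f K k Hk. exact (section_cyclic (proj1 (Hsr f K k Hk))).
  - intros [Hdsr Hcyc]. apply (dual_R_strongly_rickart Hdsr).
    intros f K k Hk. exact (cyclic_lcounit_epi reflM (Hcyc f K k Hk)).
  - intro Hsr. split; [exact (strongly_rickart_dual_R Hsr)|].
    intros f K k Hk. exact (ReflR_left_section reflM (proj1 (Hsr f K k Hk))).
  - intros [Hdsr Hrefl]. apply (dual_R_strongly_rickart Hdsr).
    intros f K k Hk. exact (iso_epi (Hrefl f K k Hk)).
Qed.
End Rickart.
End LeftAdjointPair.

Definition op_cat (C : Category) : Category :=
  {| Obj := Obj C;
     Hom := fun X Y => @Hom C Y X;
     comp := fun X Y Z g f => f ∘ g;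
     idm := fun X => idm X;
     comp_assoc := fun W X Y Z f g h => eq_sym (comp_assoc h g f);
     comp_id_l := fun X Y f => comp_id_r f;
     comp_id_r := fun X Y f => comp_id_l f |}.

Definition op_abelian (C : Category) (H : Abelian C) : Abelian (op_cat C).
Proof.
  refine {| zero := fun X Y : op_cat C => zero H Y X;
            add := fun (X Y : op_cat C) f g => @add C H Y X f g;
            opp := fun (X Y : op_cat C) f => @opp C H Y X f;
            zobj := zobj H |}.
  - intros X Y; exact (@add_assoc C H Y X).
  - intros X Y; exact (@add_comm C H Y X).
  - intros X Y; exact (@add_0l C H Y X).
  - intros X Y; exact (@add_oppr C H Y X).
  - intros X Y Z f g g'; exact (comp_addr H g g' f).
  - intros X Y Z f f' g; exact (comp_addl H g f f').
  - intros X; exact (@zobj_terminal C H X).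
  - intros X; exact (@zobj_initial C H X).
  - intros X Y.
    destruct (biproducts H X Y) as (P & i1 & i2 & p1 & p2 & E1 & E2 & E3 & E4 & E5).
    exists P, p1, p2, i1, i2. repeat split; assumption.
  - intros X Y f. exact (cokernels_exist H f).
  - intros X Y f. exact (kernels_exist H f).
  - intros X Y f Hf. exact (epi_normal H Hf).
  - intros X Y f Hf. exact (mono_normal H Hf).
Defined.

Definition op_cofunctor (C D : Category) (F : CoFunctor C D) :
  CoFunctor (op_cat C) (op_cat D) :=
  {| fobj := fun X : op_cat C => (F X : op_cat D);
     fmap := fun X Y (f : @Hom (op_cat C) X Y) => fmap F f;
     fmap_id := fun X => fmap_id F X;
     fmap_comp := fun X Y Z f g => fmap_comp F g f |}.

Definition op_right_adj (CA CB : Category) (L : CoFunctor CA CB)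
  (R : CoFunctor CB CA) (adj : RightAdj L R) :
  LeftAdj (op_cofunctor R) (op_cofunctor L) :=
  @Build_LeftAdj (op_cat CB) (op_cat CA) (op_cofunctor R) (op_cofunctor L)
    (fun (X : op_cat CB) (Y : op_cat CA) g => @radj _ _ _ _ adj Y X g)
    (fun (X : op_cat CB) (Y : op_cat CA) g => @radj_inv _ _ _ _ adj Y X g)
    (fun X Y g => radjK adj g)
    (fun X Y g => radj_invK adj g)
    (fun X' X Y a g => radj_natB adj a g)
    (fun X Y Y' b g => radj_natA adj b g).

Lemma ReflL_right_op (CA CB : Category) (L : CoFunctor CA CB)
  (R : CoFunctor CB CA) (adj : RightAdj L R) (X : CA) :
  ReflL_right adj X <-> ReflR_left (op_right_adj adj) X.
Proof.
  split; intros [g [H1 H2]]; exists g; split; assumption.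
Qed.

(* Passing to opposite categories turns cokernels into kernels, retractions
   into sections and [cocyclic] into [cyclic] up to conversion, so only the
   reflexivity clause needs translating. *)
Lemma right_adj_dual_strongly_rickart_iff (CA CB : Category) (HA : Abelian CA)
  (HB : Abelian CB) (L : CoFunctor CA CB) (R : CoFunctor CB CA)
  (adj : RightAdj L R) (M N : CA) :
  ReflL_right adj N ->
  (dual_strongly_rickart HA M N <->
     (strongly_rickart HB (L N) (L M) /\
      forall (f : Hom M N) (Q : CA) (c : Hom N Q),
        is_cokernel (zero HA) f c -> cocyclic Q N)) /\
  (dual_strongly_rickart HA M N <->
     (strongly_rickart HB (L N) (L M) /\
      forall (f : Hom M N) (Q : CA) (c : Hom N Q),
        is_cokernel (zero HA) f c -> ReflL_right adj Q)).
Proof.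
  intro reflN.
  destruct (left_adj_strongly_rickart_iff (op_abelian HB) (op_abelian HA) M
              (proj1 (ReflL_right_op adj N) reflN)) as [Hcocyclic Hrefl].
  split; [exact Hcocyclic|].
  apply (iff_trans Hrefl).
  split; intros [Hsr Hcoker]; split; try exact Hsr;
    intros f Q c Hc; apply ReflL_right_op; exact (Hcoker f Q c Hc).
Qed.

Theorem theorem4p10 (CA CB : Category) (HA : Abelian CA) (HB : Abelian CB)
  (L : CoFunctor CA CB) (R : CoFunctor CB CA) :
  (* (1) left adjoint pair *)
  (forall (adj : LeftAdj L R) (M N : CB),
     ReflR_left adj M -> ReflR_left adj N ->
     (strongly_rickart HB M N <->
        (dual_strongly_rickart HA (R N) (R M) /\
         forall (f : Hom M N) (K : CB) (k : Hom K M),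
           is_kernel (zero HB) f k -> cyclic M K)) /\
     (strongly_rickart HB M N <->
        (dual_strongly_rickart HA (R N) (R M) /\
         forall (f : Hom M N) (K : CB) (k : Hom K M),
           is_kernel (zero HB) f k -> ReflR_left adj K))) /\
  (* (2) right adjoint pair *)
  (forall (adj : RightAdj L R) (M N : CA),
     ReflL_right adj M -> ReflL_right adj N ->
     (dual_strongly_rickart HA M N <->
        (strongly_rickart HB (L N) (L M) /\
         forall (f : Hom M N) (Q : CA) (c : Hom N Q),
           is_cokernel (zero HA) f c -> cocyclic Q N)) /\
     (dual_strongly_rickart HA M N <->
        (strongly_rickart HB (L N) (L M) /\
         forall (f : Hom M N) (Q : CA) (c : Hom N Q),
           is_cokernel (zero HA) f c -> ReflL_right adj Q))).
Proof.
  split.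
  - intros adj M N reflM _.
    exact (left_adj_strongly_rickart_iff HA HB N reflM).
  - intros adj M N _ reflN.
    exact (right_adj_dual_strongly_rickart_iff HA HB M reflN).
Qed.
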